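(* Let $\mathcal A$ be a full adjunction implicative ordered combinatory algebra with underlying complete lattice $(A,\le)$, and let $\mathcal K_{\mathcal A\bullet}$ be the associated abstract Krivine structure ($\Lambda=\Pi=A$, $s\perp\pi\iff s\le\pi$, $\mathrm{push}(s,\pi)=s\to\pi$). Write $A_\Pi$, $A_\Lambda$ for $A$ viewed as $\Pi$, resp. $\Lambda$, ${\uparrow}a=\{x:a\le x\}$, ${\downarrow}a=\{x:x\le a\}$, and let $\bot,\top$ be the least and greatest elements of $A$. Then: (1) for $C\subseteq A_\Pi$, ${}^\perp C={\downarrow}(\inf C)$; for $C\subseteq A_\Lambda$, $C^\perp={\uparrow}(\sup C)$; (2) for $a\in A_\Pi$: ${}^\perp({\uparrow}a)={\downarrow}a$, ${}^\perp({\downarrow}a)=\{\bot\}$, ${}^\perp\{a\}={\downarrow}a$, $({}^\perp\{a\})^\perp={\uparrow}a$, $\overline{{\uparrow}a}={\uparrow}a$, $\widehat{{\uparrow}a}={\uparrow}a$; for $a\in A_\Lambda$: $({\downarrow}a)^\perp={\uparrow}a$, $({\uparrow}a)^\perp=\{\top\}$, $\{a\}^\perp={\uparrow}a$, ${}^\perp(\{a\}^\perp)={\downarrow}a$, and the closure of ${\downarrow}a$ on the term side, ${}^\perp(({\downarrow}a)^\perp)$, equals ${\downarrow}a$; (3) for $D\subseteq A_\Pi$: $\overline D={\uparrow}(\inf D)$ and $\widehat D=\bigcup_{c\in D}{\uparrow}c$; hence $\mathcal P_\perp(A_\Pi)$ is the set of principal filters of $A$, $\mathcal P_\bullet(A_\Pi)$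 is the set of unions of principal filters of $A$, and $\inf D=\inf\widehat D=\inf\overline D$; (4) for $C,D\subseteq A_\Pi$: $(\inf C\to\inf D)\le\inf(C\to_\perp D)=\inf(C\to_\bullet D)=\inf(C\to D)$.
   Context: A full adjunction implicative ordered combinatory algebra is an inf-complete poset $(A,\le)$ with application $ab$ monotone in both arguments, implication $a\to b$ antimonotone in the first and monotone in the second argument, elements $\mathsf k,\mathsf s$ with $\mathsf k ab\le a$, $\mathsf s abc\le ac(bc)$, such that $a\le b\to c\iff ab\le c$, and a subset $\Phi\subseteq A$ closed under application containing $\mathsf s,\mathsf k$. Polars: $L^\perp=\{\pi:\forall t\in L,\ t\perp\pi\}$, ${}^\perp P=\{t:\forall\pi\in P,\ t\perp\pi\}$; $\overline P=({}^\perp P)^\perp$; $\widehat P=\bigcup_{\pi\in P}\overline{\{\pi\}}$; $\mathcal P_\perp(\Pi)=\{P:\overline P=P\}$, $\mathcal P_\bullet(\Pi)=\{P:\widehat P=P\}$. For $C,D\subseteq\Pi$: $C\to D=\{t\cdot\pi:t\in{}^\perp C,\pi\in D\}$, $C\to_\bullet D=\widehat{C\to D}$, $C\to_\perp D=\overline{C\to D}$, where $t\cdot\pi=t\to\pi$. *)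

Definition set (T : Type) := T -> Prop.
Definition set_eq {T} (P Q : set T) : Prop := forall x, P x <-> Q x.

Record FAIOCA := {
  car :> Type;
  le : car -> car -> Prop;
  le_refl : forall a, le a a;
  le_trans : forall a b c, le a b -> le b c -> le a c;
  le_antisym : forall a b, le a b -> le b a -> a = b;
  inf : set car -> car;
  inf_lb : forall (P : set car) x, P x -> le (inf P) x;
  inf_glb : forall (P : set car) y, (forall x, P x -> le y x) -> le y (inf P);
  app : car -> car -> car;
  app_mono : forall a a' b b', le a a' -> le b b' -> le (app a b) (app a' b');
  imp : car -> car -> car;
  imp_mono : forall a a' b b', le a' a -> le b b' -> le (imp a b) (imp a' b');
  kk : car;
  ss : car;
  kk_ax : forall a b, le (app (app kk a) b) a;
  ss_ax : forall a b c, le (app (app (app ss a) b) c) (app (app a c) (app b c));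
  adjunction : forall a b c, le a (imp b c) <-> le (app a b) c;
  Phi : set car;
  Phi_app : forall a b, Phi a -> Phi b -> Phi (app a b);
  Phi_kk : Phi kk;
  Phi_ss : Phi ss
}.

Arguments le {f} _ _.
Arguments inf {f} _.
Arguments imp {f} _ _.
Arguments app {f} _ _.

Section Krivine.
Variable A : FAIOCA.

Definition sup (P : set A) : A := inf (fun y => forall x, P x -> le x y).
Definition bot : A := inf (fun _ => True).
Definition top : A := inf (fun _ => False).
Definition up (a : A) : set A := fun x => le a x.
Definition down (a : A) : set A := fun x => le x a.
Definition single (a : A) : set A := fun x => x = a.

(* Abstract Krivine structure K_{A bullet}: Lambda = Pi = A,
   s ⊥ π iff s <= π, push(s, π) = s -> π. *)
Definition perp (s pi : A) : Prop := le s pi.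
Definition push (s pi : A) : A := imp s pi.

Definition polR (L : set A) : set A := fun pi => forall t, L t -> perp t pi.
Definition polL (P : set A) : set A := fun t => forall pi, P pi -> perp t pi.
Definition cl (P : set A) : set A := polR (polL P).
Definition hat (P : set A) : set A := fun x => exists pi, P pi /\ cl (single pi) x.
Definition arr (C D : set A) : set A :=
  fun x => exists t pi, polL C t /\ D pi /\ x = push t pi.
Definition arr_bullet (C D : set A) : set A := hat (arr C D).
Definition arr_perp (C D : set A) : set A := cl (arr C D).

End Krivine.

Arguments sup {A} _.
Arguments up {A} _.
Arguments down {A} _.
Arguments single {A} _.
Arguments polR {A} _.
Arguments polL {A} _.
Arguments cl {A} _.
Arguments hat {A} _.
Arguments perp {A} _ _.
Arguments push {A} _ _.
Arguments arr {A} _ _.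
Arguments arr_bullet {A} _ _.
Arguments arr_perp {A} _ _.

(* Every polar computation reduces to one fact: since orthogonality is the order itself,
   [^⊥C] is the principal ideal of [inf C] and [L^⊥] the principal filter of [sup L].
   Hence the closure of [D] is the principal filter of [inf D], the closure of [{c}] is
   [↑c], and [hat D] is the up-closure of [D]; none of these operations changes the
   infimum.  Part (4) then follows from the monotonicity of [->] applied to the
   bounds [inf C <= t] (for [t ∈ ^⊥C]) and [inf D <= π] (for [π ∈ D]). *)

From Stdlib Require Import Setoid Morphisms.

#[export] Instance set_eq_Equivalence (T : Type) : Equivalence (@set_eq T).
Proof.
  split.
  - intros P x; reflexivity.
  - intros P Q H x; symmetry; apply H.
  - intros P Q R H1 H2 x; rewrite (H1 x); apply H2.
Qed.

Section Polars.
Variable A : FAIOCA.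

#[export] Instance inf_Proper : Proper (set_eq ==> eq) (@inf A).
Proof.
  intros P Q H; apply le_antisym; apply inf_glb; intros x Hx; apply inf_lb, H, Hx.
Qed.

#[export] Instance polR_Proper : Proper (set_eq ==> set_eq) (@polR A).
Proof.
  intros P Q H x; split; intros Hx t Ht; apply Hx, H, Ht.
Qed.

#[export] Instance polL_Proper : Proper (set_eq ==> set_eq) (@polL A).
Proof.
  intros P Q H x; split; intros Hx pi Hpi; apply Hx, H, Hpi.
Qed.

Lemma le_sup (P : set A) (x : A) : P x -> le x (sup P).
Proof. intros Hx; apply inf_glb; intros y Hy; apply Hy, Hx. Qed.

Lemma bot_le (x : A) : le (bot A) x.
Proof. apply inf_lb; exact I. Qed.

Lemma le_top (x : A) : le x (top A).
Proof. apply inf_glb; intros _ []. Qed.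

Lemma inf_eq_least (P : set A) (a : A) :
  P a -> (forall x, P x -> le a x) -> inf P = a.
Proof. intros Ha Hmin; apply le_antisym; [apply inf_lb, Ha | apply inf_glb, Hmin]. Qed.

Lemma sup_eq_greatest (P : set A) (a : A) :
  P a -> (forall x, P x -> le x a) -> sup P = a.
Proof. intros Ha Hmax; apply le_antisym; [apply inf_lb, Hmax | apply le_sup, Ha]. Qed.

Lemma inf_up (a : A) : inf (up a) = a.
Proof. apply inf_eq_least; [apply le_refl | auto]. Qed.

Lemma inf_single (a : A) : inf (single a) = a.
Proof. apply inf_eq_least; [reflexivity | intros x ->; apply le_refl]. Qed.

Lemma inf_down (a : A) : inf (down a) = bot A.
Proof. apply inf_eq_least; [apply bot_le | intros x _; apply bot_le]. Qed.

Lemma sup_down (a : A) : sup (down a) = a.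
Proof. apply sup_eq_greatest; [apply le_refl | auto]. Qed.

Lemma sup_single (a : A) : sup (single a) = a.
Proof. apply sup_eq_greatest; [reflexivity | intros x ->; apply le_refl]. Qed.

Lemma sup_up (a : A) : sup (up a) = top A.
Proof. apply sup_eq_greatest; [apply le_top | intros x _; apply le_top]. Qed.

Lemma down_bot : set_eq (down (bot A)) (single (bot A)).
Proof.
  intros x; split; [intros Hx; apply le_antisym; [exact Hx | apply bot_le] |].
  intros ->; apply le_refl.
Qed.

Lemma up_top : set_eq (up (top A)) (single (top A)).
Proof.
  intros x; split; [intros Hx; apply le_antisym; [apply le_top | exact Hx] |].
  intros ->; apply le_refl.
Qed.

Lemma polL_eq_down_inf (C : set A) : set_eq (polL C) (down (inf C)).
Proof.
  intros t; split.
  - intros Ht; apply inf_glb, Ht.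
  - intros Ht pi Hpi; apply le_trans with (inf C); [exact Ht | apply inf_lb, Hpi].
Qed.

Lemma polR_eq_up_sup (L : set A) : set_eq (polR L) (up (sup L)).
Proof.
  intros pi; split.
  - intros Hpi; apply inf_lb, Hpi.
  - intros Hpi t Ht; apply le_trans with (sup L); [apply le_sup, Ht | exact Hpi].
Qed.

Lemma cl_eq_up_inf (D : set A) : set_eq (cl D) (up (inf D)).
Proof. unfold cl; rewrite polL_eq_down_inf, polR_eq_up_sup, sup_down; reflexivity. Qed.

Lemma cl_single (c : A) : set_eq (cl (single c)) (up c).
Proof. rewrite cl_eq_up_inf, inf_single; reflexivity. Qed.

Lemma inf_cl (D : set A) : inf D = inf (cl D).
Proof. rewrite cl_eq_up_inf, inf_up; reflexivity. Qed.

Definition up_closure (D : set A) : set A := fun x => exists c, D c /\ up c x.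

#[export] Instance up_closure_Proper : Proper (set_eq ==> set_eq) up_closure.
Proof.
  intros P Q H x; split; intros [c [Hc Hcx]]; exists c; split; try exact Hcx; apply H, Hc.
Qed.

Lemma hat_eq_up_closure (D : set A) : set_eq (hat D) (up_closure D).
Proof.
  intros x; split; intros [c [Hc Hx]]; exists c; split; try exact Hc; apply cl_single, Hx.
Qed.

Lemma inf_up_closure (D : set A) : inf (up_closure D) = inf D.
Proof.
  apply le_antisym; apply inf_glb; intros x Hx.
  - apply inf_lb; exists x; split; [exact Hx | apply le_refl].
  - destruct Hx as [c [Hc Hcx]]; apply le_trans with c; [apply inf_lb, Hc | exact Hcx].
Qed.

Lemma inf_hat (D : set A) : inf D = inf (hat D).
Proof. rewrite hat_eq_up_closure, inf_up_closure; reflexivity. Qed.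

Lemma up_closure_up (a : A) : set_eq (up_closure (up a)) (up a).
Proof.
  intros x; split.
  - intros [c [Hac Hcx]]; exact (le_trans _ _ _ _ Hac Hcx).
  - intros Hx; exists x; split; [exact Hx | apply le_refl].
Qed.

Lemma up_closure_idem (S : set A) : set_eq (up_closure (up_closure S)) (up_closure S).
Proof.
  intros x; split.
  - intros [c [[d [Hd Hdc]] Hcx]]; exists d; split; [exact Hd | exact (le_trans _ _ _ _ Hdc Hcx)].
  - intros Hx; exists x; split; [exact Hx | apply le_refl].
Qed.

Lemma cl_fixed_iff_principal (P : set A) :
  set_eq (cl P) P <-> exists a, set_eq P (up a).
Proof.
  rewrite cl_eq_up_inf; split.
  - intros H; exists (inf P); symmetry; exact H.
  - intros [a Ha]; rewrite (inf_Proper _ _ Ha), inf_up; symmetry; exact Ha.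
Qed.

Lemma hat_fixed_iff_up_closure (P : set A) :
  set_eq (hat P) P <-> exists S, set_eq P (up_closure S).
Proof.
  rewrite hat_eq_up_closure; split.
  - intros H; exists P; symmetry; exact H.
  - intros [S HS]; rewrite HS; apply up_closure_idem.
Qed.

Lemma imp_inf_le_inf_arr (C D : set A) : le (imp (inf C) (inf D)) (inf (arr C D)).
Proof.
  apply inf_glb; intros x [t [pi [Ht [Hpi ->]]]].
  apply imp_mono; [apply inf_glb, Ht | apply inf_lb, Hpi].
Qed.

End Polars.

Theorem mainTheorem12 (A : FAIOCA) :
  (* (1) *)
  (forall C : set A, set_eq (polL C) (down (inf C))) /\
  (forall C : set A, set_eq (polR C) (up (sup C))) /\
  (* (2), Pi side *)
  (forall a : A,
     set_eq (polL (up a)) (down a) /\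
     set_eq (polL (down a)) (single (bot A)) /\
     set_eq (polL (single a)) (down a) /\
     set_eq (polR (polL (single a))) (up a) /\
     set_eq (cl (up a)) (up a) /\
     set_eq (hat (up a)) (up a)) /\
  (* (2), Lambda side *)
  (forall a : A,
     set_eq (polR (down a)) (up a) /\
     set_eq (polR (up a)) (single (top A)) /\
     set_eq (polR (single a)) (up a) /\
     set_eq (polL (polR (single a))) (down a) /\
     set_eq (polL (polR (down a))) (down a)) /\
  (* (3) *)
  (forall D : set A,
     set_eq (cl D) (up (inf D)) /\
     set_eq (hat D) (fun x => exists c, D c /\ up c x)) /\
  (forall P : set A, set_eq (cl P) P <-> exists a : A, set_eq P (up a)) /\
  (forall P : set A, set_eq (hat P) P <->
     exists S : set A, set_eq P (fun x => exists c, S c /\ up c x)) /\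
  (forall D : set A, inf D = inf (hat D) /\ inf D = inf (cl D)) /\
  (* (4) *)
  (forall C D : set A,
     le (imp (inf C) (inf D)) (inf (arr_perp C D)) /\
     inf (arr_perp C D) = inf (arr_bullet C D) /\
     inf (arr_bullet C D) = inf (arr C D)).
Proof.
  unfold arr_perp, arr_bullet.
  split; [apply polL_eq_down_inf |].
  split; [apply polR_eq_up_sup |].
  split.
  { intros a; rewrite !polL_eq_down_inf, polR_eq_up_sup, cl_eq_up_inf, hat_eq_up_closure.
    rewrite inf_up, inf_down, inf_single, sup_down, down_bot, up_closure_up.
    repeat apply conj; reflexivity. }
  split.
  { intros a; rewrite !polR_eq_up_sup, !polL_eq_down_inf.
    rewrite sup_down, sup_up, sup_single, inf_up, up_top.
    repeat apply conj; reflexivity. }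
  split; [intros D; split; [apply cl_eq_up_inf | apply hat_eq_up_closure] |].
  split; [apply cl_fixed_iff_principal |].
  split; [apply hat_fixed_iff_up_closure |].
  split; [intros D; split; [apply inf_hat | apply inf_cl] |].
  intros C D; rewrite <- inf_cl, <- inf_hat.
  split; [apply imp_inf_le_inf_arr | split; reflexivity].
Qed.
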